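(* For every $k\ge1$, every $\sigma\in S_k$ and every real $x>2k^2$, $$\sum_{\rho\in S_k\text{ a }k\text{-cycle}}x^{-|\sigma\rho^{-1}|}\le 2\,\frac{(k-1)!}{(k-|\mathsf{cyc}(\sigma)|+1)!}\,k^{|\mathsf{cyc}(\sigma)|}\,x^{-|\mathsf{cyc}(\sigma)|+1}.$$
   Context: $S_k$ is the symmetric group on $\{1,\dots,k\}$; $\mathsf{cyc}(\sigma)$ is the set of cycles of $\sigma$ (fixed points included). The Cayley weight $|\sigma|$ of $\sigma\in S_k$ is the minimum number of transpositions whose product is $\sigma$; equivalently $|\sigma|=k-|\mathsf{cyc}(\sigma)|$. *)

From mathcomp Require Import all_boot all_order all_algebra all_fingroup.
Set Implicit Arguments. Unset Strict Implicit. Unset Printing Implicit Defensive.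

(* cyc(s): the set of cycles of s (fixed points included) = porbits s *)
Definition ncyc (k : nat) (s : 'S_k) : nat := #|porbits s|.

Definition cayley_weight (k : nat) (s : 'S_k) : nat := k - ncyc s.

Definition is_kcycle (k : nat) (r : 'S_k) : bool :=
  porbits r == [set [set: 'I_k]].

From mathcomp Require Import all_boot all_order all_algebra all_fingroup.
From mathcomp Require Import zify ring lra.
Import Order.TTheory GRing.Theory Num.Theory.

Set Implicit Arguments.
Unset Strict Implicit.
Unset Printing Implicit Defensive.

(* Let c be the number of cycles of sigma. Subadditivity of the Cayley weight
   gives |sigma rho^-1| >= c - 1 for every k-cycle rho, and there are at most
   C(k,2)^d permutations of weight d, each being a transposition times one of
   weight d - 1. If 2c > k, bound each of the at most k! terms by x^(1-c).
   If 2c <= k, sum over all permutations of weight at least c - 1 instead: this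
   is dominated by a geometric series of ratio C(k,2)/x <= 1/4, hence by
   (4/3) (C(k,2)/x)^(c-1), and C(k,2)^(c-1) (k-c+1)! <= (k-1)! k^c since each of
   the factors C(k,2) is at most k times one of k, k-1, ..., k-c+2. *)

Lemma factS_leq_expn n k : n < k -> n.+1`! <= k ^ n.
Proof.
elim: n => [|n IHn] lt_nk; first by rewrite expn0.
by rewrite factS expnS leq_mul // IHn // ltnW.
Qed.

Lemma fact_mul_fact_leq k c : c <= k -> k < c.*2 ->
  k`! * (k - c + 1)`! <= (k.-1)`! * k ^ c.
Proof.
case: k => [|k] le_ck lt_k_2c; first by lia.
have c_gt0 : 0 < c by lia.
have le_fact : (k.+1 - c + 1)`! <= k.+1 ^ c.-1.
  apply: leq_trans (_ : k.+1 ^ (k.+1 - c) <= _); first by rewrite addn1 factS_leq_expn //; lia.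
  by rewrite leq_pexp2l //; lia.
have -> : k.+1 ^ c = k.+1 * k.+1 ^ c.-1 by rewrite -expnS prednK.
by rewrite factS /=; apply: leq_trans (leq_mul (leqnn _) le_fact) _; lia.
Qed.

Lemma bin2_expn_fact_leq k j : j.+1.*2 <= k ->
  'C(k, 2) ^ j * (k - j)`! <= (k.-1)`! * k ^ j.+1.
Proof.
elim: j => [|j IHj] le_2j_k.
  by case: k le_2j_k => // k _; rewrite expn0 mul1n subn0 factS expn1 mulnC.
have le_bin2 : 'C(k, 2) <= k * (k - j).
  by have := mul_bin_diag k 1; rewrite bin1; nia.
have fact_sub : (k - j)`! = (k - j) * (k - j.+1)`!.
  by have -> : k - j = (k - j.+1).+1 by lia.
rewrite -(@leq_pmul2l (k - j)); last by lia.
apply: leq_trans (_ : 'C(k, 2) * ((k.-1)`! * k ^ j.+1) <= _).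
  have := leq_mul (leqnn 'C(k, 2)) (IHj ltac:(lia)).
  by rewrite fact_sub (expnS 'C(k, 2)); nia.
have := leq_mul le_bin2 (leqnn ((k.-1)`! * k ^ j.+1)).
by rewrite (expnS k j.+1); nia.
Qed.

Lemma leq_double_bin2 k : 'C(k, 2).*2 <= k ^ 2.
Proof. by rewrite -mul2n -mul_bin_diag bin1 -mulnn leq_mul2l leq_pred orbT. Qed.

Section CayleyWeight.
Variable k : nat.
Implicit Types (s a b r : 'S_k).

Lemma ncyc_le s : ncyc s <= k.
Proof. by rewrite /ncyc; apply: leq_trans (leq_imset_card _ _) _; rewrite card_ord. Qed.

Lemma ncyc_gt0 s : 0 < k -> 0 < ncyc s.
Proof.
move=> k_gt0; rewrite card_gt0; apply/set0Pn.
by exists (porbit s (Ordinal k_gt0)); exact: imset_f.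
Qed.

Lemma ncyc1 : ncyc (1%g : 'S_k) = k.
Proof.
rewrite /ncyc /porbits card_imset ?card_ord // => x y /eqP.
by rewrite eq_porbit_mem => /porbitP [i ->]; rewrite expg1n perm1.
Qed.

Lemma cayley_weight1 : cayley_weight (1%g : 'S_k) = 0.
Proof. by rewrite /cayley_weight ncyc1 subnn. Qed.

Lemma cayley_weightV s : cayley_weight s^-1 = cayley_weight s.
Proof. by rewrite /cayley_weight /ncyc porbitsV. Qed.

Lemma cayley_weight_tpermM x y s :
  cayley_weight (tperm x y * s) <= (cayley_weight s).+1.
Proof.
have [<-|xy_neq] := eqVneq x y; first by rewrite tperm1 mul1g.
have := porbits_mul_tperm s x y; have := ncyc_le s; have := ncyc_le (tperm x y * s).
by rewrite /cayley_weight /ncyc xy_neq -mul2n; case: (_ \notin _) => /=; lia.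
Qed.

(* Multiplying by the transposition (x, s x) splits the cycle of x in two. *)
Lemma cayley_weight_tpermM_pred s : s != 1%g ->
  exists x y, x != y /\ (cayley_weight (tperm x y * s)).+1 = cayley_weight s.
Proof.
move=> s_neq1; have [x sx_neq_x] : exists x, s x != x.
  apply/existsP; apply: contraR s_neq1 => /existsPn s_id.
  by apply/eqP/permP => z; rewrite perm1; apply/eqP; have := s_id z; rewrite negbK.
exists x, (s x); split; first by rewrite eq_sym.
have := porbits_mul_tperm s x (s x); have := ncyc_le (tperm x (s x) * s).
have -> : x \in porbit s (s x) by rewrite porbit_sym -{1}(expg1 s) mem_porbit.
by rewrite eq_sym sx_neq_x /cayley_weight /ncyc /=; lia.
Qed.

Lemma cayley_weight_eq0 s : (cayley_weight s == 0) = (s == 1%g).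
Proof.
have [->|/cayley_weight_tpermM_pred [x [y [_ <-]]]] // := eqVneq s 1%g.
by rewrite cayley_weight1.
Qed.

Lemma cayley_weightM a b : cayley_weight (a * b) <= cayley_weight a + cayley_weight b.
Proof.
have [n] := ubnP (cayley_weight a); elim: n a => // n IHn a /ltnSE le_an.
have [->|a_neq1] := eqVneq a 1%g; first by rewrite mul1g cayley_weight1.
have [x [y [_ w_ta]]] := cayley_weight_tpermM_pred a_neq1.
have -> : (a * b = tperm x y * (tperm x y * a * b))%g by rewrite !mulgA tperm2 mul1g.
apply: leq_trans (cayley_weight_tpermM _ _ _) _.
by rewrite -w_ta addSn ltnS IHn //; lia.
Qed.

Lemma cayley_weight_kcycle r : is_kcycle r -> cayley_weight r = k.-1.
Proof. by rewrite /is_kcycle /cayley_weight /ncyc => /eqP ->; rewrite cards1 subn1. Qed.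

Lemma ncyc_pred_le_cayley_weight s r :
  is_kcycle r -> (ncyc s).-1 <= cayley_weight (s * r^-1).
Proof.
move=> r_kcycle; have := cayley_weightM s^-1 (s * r^-1).
rewrite mulKg !cayley_weightV cayley_weight_kcycle // /cayley_weight.
have := ncyc_le s; lia.
Qed.

Definition transpositions : {set 'S_k} :=
  [set tperm (tnth u ord0) (tnth u ord_max)
     | u in [set u : 2.-tuple 'I_k | sorted ltn (map val u)]].

Lemma card_transpositions : #|transpositions| <= 'C(k, 2).
Proof. by rewrite -card_ltn_sorted_tuples leq_imset_card. Qed.

Lemma tperm_in_transpositions x y : x != y -> tperm x y \in transpositions.
Proof.
wlog lt_xy : x y / x < y => [wlog_lt xy_neq|_].
  have [lt_xy|lt_yx|eq_xy] := ltngtP x y; first exact: wlog_lt.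
    by rewrite tpermC wlog_lt // eq_sym.
  by move: xy_neq; rewrite (val_inj eq_xy) eqxx.
by apply/imsetP; exists [tuple x; y]; rewrite // inE /= andbT.
Qed.

Lemma card_cayley_weight d :
  #|[set s : 'S_k | cayley_weight s == d]| <= 'C(k, 2) ^ d.
Proof.
elim: d => [|d IHd].
  rewrite expn0 -(cards1 (1%g : 'S_k)); apply: subset_leq_card.
  by apply/subsetP => s; rewrite !inE cayley_weight_eq0.
pose W := [set s : 'S_k | cayley_weight s == d].
apply: leq_trans (_ : #|[set (p.1 * p.2)%g | p in setX transpositions W]| <= _).
  apply: subset_leq_card; apply/subsetP => s; rewrite inE => /eqP w_s.
  have s_neq1 : s != 1%g by rewrite -cayley_weight_eq0 w_s.
  have [x [y [xy_neq w_ts]]] := cayley_weight_tpermM_pred s_neq1.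
  apply/imsetP; exists (tperm x y, tperm x y * s)%g.
    by rewrite !inE tperm_in_transpositions //=; apply/eqP; lia.
  by rewrite /= mulgA tperm2 mul1g.
apply: leq_trans (leq_imset_card _ _) _.
by rewrite cardsX expnS leq_mul // card_transpositions.
Qed.

End CayleyWeight.

Local Open Scope ring_scope.

Lemma sum_by_cayley_weight (V : nmodType) (k : nat) (F : nat -> V) :
  \sum_(t : 'S_k) F (cayley_weight t)
  = \sum_(d < k.+1) F d *+ #|[set t : 'S_k | cayley_weight t == d]|.
Proof.
have w_lt (t : 'S_k) : (cayley_weight t < k.+1)%N by rewrite ltnS leq_subr.
rewrite (partition_big (fun t => Ordinal (w_lt t)) predT) //=.
apply: eq_bigr => d _; rewrite -sumr_const; apply: eq_big => [t|t /eqP <-] //.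
by rewrite inE -val_eqE.
Qed.

Lemma geometric_tail_le (R : numDomainType) (q : R) m n : 0 <= q ->
  (1 - q) * \sum_(m <= d < n) q ^+ d <= q ^+ m.
Proof.
move=> q_ge0; have [le_mn|lt_nm] := leqP m n; last first.
  by rewrite big_geq ?mulr0 ?exprn_ge0 // ltnW.
rewrite mulr_sumr.
under eq_bigr do rewrite mulrBl mul1r -exprS -opprB.
by rewrite sumrN telescope_sumr // opprB gerBl exprn_ge0.
Qed.

Section KcycleSum.
Variables (R : realFieldType) (k : nat) (sigma : 'S_k) (x : R).

Lemma kcycle_sum_le_fact : 1 <= x ->
  \sum_(rho : 'S_k | is_kcycle rho) x ^- cayley_weight (sigma * rho^-1)
  <= k`!%:R * x ^- (ncyc sigma).-1.
Proof.
move=> x_ge1; have x_gt0 : 0 < x by apply: lt_le_trans x_ge1.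
apply: le_trans (_ : \sum_(rho : 'S_k | is_kcycle rho) x ^- (ncyc sigma).-1 <= _).
  apply: ler_sum => rho /(ncyc_pred_le_cayley_weight sigma) le_w.
  by rewrite lef_pV2 ?posrE ?exprn_gt0 // ler_weXn2l.
rewrite sumr_const mulr_natl -card_Sn ler_wpMn2l ?invr_ge0 ?exprn_ge0 ?ltW //.
exact: max_card.
Qed.

Lemma kcycle_sum_le_geometric : 0 < x -> 4 * 'C(k, 2)%:R <= x ->
  3 * \sum_(rho : 'S_k | is_kcycle rho) x ^- cayley_weight (sigma * rho^-1)
  <= 4 * ('C(k, 2) ^ (ncyc sigma).-1)%:R * x ^- (ncyc sigma).-1.
Proof.
move=> x_gt0 le_4C_x; set m := (ncyc sigma).-1; set q : R := 'C(k, 2)%:R / x.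
have q_ge0 : 0 <= q by rewrite divr_ge0 ?ler0n ?ltW.
have xV_ge0 d : 0 <= x ^- d by rewrite invr_ge0 exprn_ge0 ?ltW.
have le_4q_1 : 4 * q <= 1 by rewrite mulrA ler_pdivrMr ?mul1r.
have qX d : q ^+ d = ('C(k, 2) ^ d)%:R * x ^- d by rewrite exprMn exprVn natrX.
pose G d := if (m <= d)%N then x ^- d else 0.
have h_inj : injective (fun rho : 'S_k => sigma * rho^-1)%g.
  exact: inj_comp (mulgI sigma) (@invg_inj _).
have le_sum_G : \sum_(rho : 'S_k | is_kcycle rho) x ^- cayley_weight (sigma * rho^-1)
                <= \sum_(t : 'S_k) G (cayley_weight t).
  rewrite [leRHS](reindex_inj h_inj) /= big_mkcond /=; apply: ler_sum => rho _.
  have [rho_kcycle|_] := boolP (is_kcycle rho).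
    by rewrite /G ncyc_pred_le_cayley_weight.
  by rewrite /G /=; case: (m <= _)%N.
have le_G_geom : \sum_(t : 'S_k) G (cayley_weight t) <= \sum_(m <= d < k.+1) q ^+ d.
  rewrite sum_by_cayley_weight big_geq_mkord [leRHS]big_mkcond /=.
  apply: ler_sum => d _; rewrite /G; case: ifP => _; last by rewrite mul0rn.
  rewrite -mulr_natr qX mulrC ler_wpM2r // ler_nat.
  exact: card_cayley_weight.
have tail_ge0 : 0 <= \sum_(m <= d < k.+1) q ^+ d.
  by apply: sumr_ge0 => d _; rewrite exprn_ge0.
have le_prod : 0 <= (1 - 4 * q) * \sum_(m <= d < k.+1) q ^+ d.
  by rewrite mulr_ge0 // subr_ge0.
rewrite -mulrA -qX; have := geometric_tail_le m k.+1 q_ge0.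
(* Hiding the bodies keeps lra from unfolding the natural-number casts. *)
move: le_sum_G le_G_geom le_prod; clear.
set S := \sum_(rho | _) _; set U := \sum_t _; set T := \sum_(m <= d < _) _.
set Q := q ^+ m; clearbody S U T Q q.
lra.
Qed.

End KcycleSum.

Theorem lemma5p11 (R : realFieldType) (k : nat) (sigma : 'S_k) (x : R) :
  (1 <= k)%N -> 2 * (k ^ 2)%:R < x ->
  \sum_(rho : 'S_k | is_kcycle rho) x ^- cayley_weight (sigma * rho^-1)%g
  <= 2 * (k.-1)`!%:R / (k - ncyc sigma + 1)`!%:R * (k ^ ncyc sigma)%:R
       * x ^- (ncyc sigma) * x.
Proof.
move=> k_gt0 lt_2k2_x; set c := ncyc sigma.
have c_gt0 : (0 < c)%N := ncyc_gt0 sigma k_gt0.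
have le_ck : (c <= k)%N := ncyc_le sigma.
have x_ge1 : 1 <= x.
  by apply: le_trans (ltW lt_2k2_x); rewrite -natrM ler1n muln_gt0 expn_gt0 k_gt0.
have x_gt0 : 0 < x by apply: lt_le_trans x_ge1.
set S := \sum_(rho | _) _; set X := x ^- c.-1.
set A := (k.-1)`!%:R; set K := (k ^ c)%:R; set F := (k - c + 1)`!%:R.
have X_ge0 : 0 <= X by rewrite invr_ge0 exprn_ge0 ?ltW.
have F_gt0 : 0 < F by rewrite ltr0n fact_gt0.
have AKX_ge0 : 0 <= A * K * X by rewrite !mulr_ge0 ?ler0n.
have -> : 2 * A / F * K * x ^- c * x = 2 * (A * K * X) / F.
  rewrite -mulrA (_ : x ^- c * x = X).
    by rewrite [_ / F * K]mulrAC [_ / F * X]mulrAC !mulrA.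
  by rewrite /X -{1}(prednK c_gt0) exprS invfM mulrAC mulVf ?mul1r ?gt_eqF.
rewrite ler_pdivlMr //.
case: (leqP k.+1 c.*2) => [lt_k_2c|le_2c_k].
  have le_S := kcycle_sum_le_fact sigma x_ge1; rewrite -/c -/X -/S in le_S.
  have le_AK : k`!%:R * F <= A * K by rewrite -!natrM ler_nat fact_mul_fact_leq.
  have := ler_wpM2r (ltW F_gt0) le_S; have := ler_wpM2r X_ge0 le_AK.
  move: AKX_ge0; clearbody S X A K F; lra.
have le_4C_x : 4 * 'C(k, 2)%:R <= x.
  by apply: le_trans (ltW lt_2k2_x); rewrite -!natrM ler_nat; have := leq_double_bin2 k; lia.
have le_S := kcycle_sum_le_geometric sigma x_gt0 le_4C_x; rewrite -/c -/X -/S in le_S.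
have le_AK : ('C(k, 2) ^ c.-1)%:R * F <= A * K.
  rewrite /A /K /F -!natrM ler_nat (_ : (k - c + 1 = k - c.-1)%N); last by lia.
  by have := @bin2_expn_fact_leq k c.-1; rewrite prednK //; apply; lia.
have := ler_wpM2r (ltW F_gt0) le_S; have := ler_wpM2r X_ge0 le_AK.
set Cm := ('C(k, 2) ^ c.-1)%:R in le_S le_AK *.
move: AKX_ge0; clearbody S X A K F Cm; lra.
Qed.
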